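(* Let $G$ be a finite connected graph with node set $V$ and diameter $\operatorname{diam}(G)$. Algorithm 3 (described in the context), for any way of choosing the node $x$ in each iteration, terminates and outputs a node $b$ and a set $U$ such that $e(b)=\operatorname{diam}(G)$ and $U$ is a diameter certificate of $G$ with $|U|\le\pi_{1/3}$, using $O(\pi_{1/3})$ one-to-all distance queries. Here, for $\alpha>0$, $\pi_\alpha$ is the maximum size of a packing for the collection $\mathcal{D}_\alpha=\{B(u,\alpha(\operatorname{diam}(G)-e(u))):u\in V\}$. Moreover, $|U|\le\frac{\pi_{1/3}}{\pi_{[1]}}\cdot\kappa$, where $\kappa$ is the minimum size of a diameter certificate of $G$ and $\pi_{[1]}$ is the maximum size of a packing for $\mathcal{D}_{[1]}=\{B[u,\operatorname{diam}(G)-e(u)]:u\in V\}$.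
   Context: $G$ is undirected, unweighted, connected with finite node set $V$; $d$ is the shortest-path distance, $e(u)=\max_v d(u,v)$, $\operatorname{diam}(G)=\max_u e(u)$. Balls: $B[u,\rho]=\{v: d(u,v)\le\rho\}$, $B(u,\rho)=\{v:d(u,v)<\rho\}$. A packing for a collection $\mathcal{S}$ of subsets of $V$ is a set $P\subseteq V$ such that every set of $\mathcal{S}$ contains at most one element of $P$. For $U\subseteq V$ let $e^U(v)=\min_{x\in U}(d(v,x)+e(x))$ ($=+\infty$ if $U=\emptyset$). A diameter certificate is a set $U$ with $e^U(v)\le\operatorname{diam}(G)$ for all $v$. A one-to-all distance query from $x$ computes $(d(x,v))_{v\in V}$. Algorithm 3: start with $U=K=\emptyset$. Repeat: select $u$ with $e^U(u)$ maximal (ties arbitrary); query from $u$, compute $e(u)$, add $u$ to $K$; choose any node $x$ with $d(u,x)+e(x)=e(u)$ (e.g. $x=u$); query from $x$, compute $e(x)$, add $x$ to $U$ and update $e^U$. Stop as soon as $\max_{w\in K}e(w)\ge\max_{v\in V}e^U(v)$, and output $b\in K$ maximizing $e$ over $K$, together with $e(b)$ and $U$. *)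

(* Graph = symmetric irreflexive relation on a finType. *)
From mathcomp Require Import all_boot.
Set Implicit Arguments. Unset Strict Implicit. Unset Printing Implicit Defensive.

Section Graph.
Variables (T : finType) (e : rel T).

Definition reach (n : nat) (u : T) : {set T} :=
  iter n (fun S => S :|: [set y | [exists x in S, e x y]]) [set u].

(* shortest-path distance: least n with v in reach n u (all distances are
   < #|T| in a connected graph; #|T| is returned only if unreachable) *)
Definition dist (u v : T) : nat := find (fun n => v \in reach n u) (iota 0 #|T|).

Definition ecc (u : T) : nat := \max_(v : T) dist u v.
Definition diam : nat := \max_(u : T) ecc u.

(* extended naturals: None = +infinity *)
Definition omin (a b : option nat) : option nat :=
  match a, b with
  | None, _ => b
  | _, None => a
  | Some x, Some y => Some (minn x y)
  end.
Definition oleq (a b : option nat) : bool :=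
  match a, b with
  | _, None => true
  | None, Some _ => false
  | Some x, Some y => x <= y
  end.

Definition eU (U : {set T}) (v : T) : option nat :=
  \big[omin/None]_(x in U) Some (dist v x + ecc x).

Definition diam_certificate (U : {set T}) : bool :=
  [forall v, oleq (eU U v) (Some diam)].

(* packings of the collections D_{1/3} (open balls B(u,(diam-e(u))/3))
   and D_[1] (closed balls B[u, diam-e(u)]) *)
Definition open_ball3 (u : T) : {set T} := [set v | 3 * dist u v < diam - ecc u].
Definition closed_ball1 (u : T) : {set T} := [set v | dist u v <= diam - ecc u].
Definition packing (D : T -> {set T}) (P : {set T}) : bool :=
  [forall u, #|P :&: D u| <= 1].
Definition pi_third : nat := \max_(P : {set T} | packing open_ball3 P) #|P|.
Definition pi_closed1 : nat := \max_(P : {set T} | packing closed_ball1 P) #|P|.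
(* kappa = minimum size of a diameter certificate (the whole node set is one) *)
Definition kappa : nat := \big[minn/#|T|]_(U : {set T} | diam_certificate U) #|U|.

(* Algorithm 3. A run is the sequence of pairs (u_i, x_i) chosen in the
   successive iterations; K = {u_i}, U = {x_i}. *)
Definition Kof (r : seq (T * T)) : seq T := map fst r.
Definition Uof (r : seq (T * T)) : {set T} := [set x in map snd r].

Definition stopped (r : seq (T * T)) : bool :=
  [forall v, oleq (eU (Uof r) v) (Some (\max_(w <- Kof r) ecc w))].

Definition legal_step (pre : seq (T * T)) (p : T * T) : Prop :=
  (forall v, oleq (eU (Uof pre) v) (eU (Uof pre) p.1)) /\
  dist p.1 p.2 + ecc p.2 = ecc p.1.

Definition valid_run (r : seq (T * T)) : Prop :=
  forall pre p post, r = pre ++ p :: post ->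
    ~~ stopped pre /\ legal_step pre p.

End Graph.

(* Let (u_j, x_j) be the pairs chosen by the algorithm. When u_i is chosen after u_j, the
   stopping test has failed, so e^U(u_i) > e(u_j); also e^U(u_i) >= diam, because
   e^U(v) >= e(v) for every v. Since x_j is in U and d(u_j,x_j) + e(x_j) = e(u_j), the
   triangle inequality gives d(u_i,u_j) > 0 and d(u_i,u_j) >= diam - e(u_j). Two such
   nodes cannot share a ball B(v, (diam - e(v))/3), as e(u_j) <= d(u_j,v) + e(v); hence the
   u_j form a packing for D_{1/3} and there are at most pi_{1/3} iterations. When the test
   succeeds, diam <= max_v e^U(v) <= max_K e <= diam, so U is a certificate and the best
   u_j realises the diameter. Finally a certificate U meets every packing P of D_[1]
   injectively: each p in P picks x in U with d(p,x) + e(x) <= diam, and p then lies in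
   B[x, diam - e(x)]; thus pi_[1] <= kappa. *)

From HB Require Import structures.
From mathcomp Require Import all_boot.
From mathcomp Require Import zify.

Set Implicit Arguments. Unset Strict Implicit. Unset Printing Implicit Defensive.

Lemma ominA : associative omin.
Proof. by move=> [a|] [b|] [c|] //=; rewrite minnA. Qed.

Lemma ominC : commutative omin.
Proof. by move=> [a|] [b|] //=; rewrite minnC. Qed.

Lemma omin0 : left_id None omin.
Proof. by case. Qed.

HB.instance Definition _ := Monoid.isComLaw.Build (option nat) None omin ominA ominC omin0.

Lemma oleq_trans b a c : oleq a b -> oleq b c -> oleq a c.
Proof. by case: a b c => [a|] [b|] [c|] //=; apply: leq_trans. Qed.

Lemma oleq_omin c a b : oleq c (omin a b) = oleq c a && oleq c b.
Proof. by case: a b c => [a|] [b|] [c|] //=; rewrite ?andbT // leq_min. Qed.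

Lemma omin_oleq a b k : oleq (omin a b) (Some k) = oleq a (Some k) || oleq b (Some k).
Proof. by case: a b => [a|] [b|] //=; rewrite ?orbF // geq_min. Qed.

Lemma oleqNgt a k : ~~ oleq a (Some k) = oleq (Some k.+1) a.
Proof. by case: a => [a|] //=; rewrite -ltnNge. Qed.

Lemma exists_oleq_max (T : finType) (f : T -> option nat) :
  0 < #|T| -> exists u, forall v, oleq (f v) (f u).
Proof.
move=> /card_gt0P [x0 _].
case: (pickP (fun v => f v == None)) => [u /eqP fu | f_fin].
  by exists u => v; rewrite fu; case: (f v).
have [u _ u_max] := @arg_maxnP T x0 xpredT (odflt 0 \o f) isT.
exists u => v; move: (u_max v isT) (f_fin u) (f_fin v) => /=.
by case: (f v) (f u) => [a|] [b|].
Qed.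

Lemma pairwise_packing (T : finType) (D : T -> {set T}) (R : rel T) s :
    (forall a b v, R a b -> a \in D v -> b \in D v -> False) ->
  pairwise R s -> packing D [set x in s].
Proof.
move=> R_apart R_s; apply/forallP => v; apply/card_le1_eqP => a b.
rewrite !in_setI !inE => /andP [a_s av] /andP [b_s bv].
have nth_s c : c \in s -> nth a s (index c s) = c by apply: nth_index.
have R_index c d : c \in s -> d \in s -> index c s < index d s -> R c d.
  move=> c_s d_s lt_cd; rewrite -(nth_s c) // -(nth_s d) //.
  by move/(pairwiseP a): R_s; apply; rewrite // inE index_mem.
have [lt_ab|lt_ba|eq_ab] := ltngtP (index a s) (index b s).
- by case: (R_apart a b v (R_index a b a_s b_s lt_ab)).
- by case: (R_apart b a v (R_index b a b_s a_s lt_ba)).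
- by rewrite -(nth_s a) // eq_ab nth_s.
Qed.

Section Graph.
Variables (T : finType) (e : rel T).

Local Notation reach := (reach e).
Local Notation dist := (dist e).
Local Notation ecc := (ecc e).
Local Notation diam := (diam e).
Local Notation eU := (eU e).

Lemma reachS n u v :
  (v \in reach n.+1 u) = (v \in reach n u) || [exists x in reach n u, e x v].
Proof. by rewrite /reach iterS !inE. Qed.

Lemma reach0 u v : (v \in reach 0 u) = (v == u).
Proof. by rewrite /reach /= inE. Qed.

Lemma reach_leq m n u : m <= n -> reach m u \subset reach n u.
Proof.
move=> /subnK <-; elim: (n - m) => [|k IHk]; first exact: subxx.
apply: subset_trans IHk _; apply/subsetP => v v_reach.
by rewrite addSn reachS v_reach.
Qed.

Lemma reach_trans m n u v w :
  v \in reach m u -> w \in reach n v -> w \in reach (m + n) u.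
Proof.
move=> uv; elim: n w => [|n IHn] w; first by rewrite reach0 addn0 => /eqP ->.
rewrite addnS !reachS => /orP [vw | /existsP [x /andP [vx xw]]].
  by rewrite IHn.
by apply/orP; right; apply/existsP; exists x; rewrite IHn.
Qed.

Hypothesis e_sym : symmetric e.

Lemma reach_sym n u v : v \in reach n u -> u \in reach n v.
Proof.
elim: n u v => [|n IHn] u v; first by rewrite !reach0 eq_sym.
rewrite reachS => /orP [uv | /existsP [x /andP [ux xv]]].
  exact: subsetP (reach_leq v (leqnSn n)) _ (IHn _ _ uv).
have vx : x \in reach 1 v.
  by rewrite reachS; apply/orP; right; apply/existsP; exists v; rewrite reach0 eqxx e_sym.
by rewrite -add1n; apply: reach_trans vx (IHn _ _ ux).
Qed.

Lemma dist_leqN u v : dist u v <= #|T|.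
Proof. by rewrite /dist -{2}(size_iota 0 #|T|) find_size. Qed.

Lemma dist_leq n u v : v \in reach n u -> dist u v <= n.
Proof.
move=> uv; rewrite leqNgt; apply/negP => lt_n_dist.
have lt_n_N := leq_trans lt_n_dist (dist_leqN u v).
by have := before_find 0 lt_n_dist; rewrite nth_iota // add0n uv.
Qed.

Lemma reach_dist u v : dist u v < #|T| -> v \in reach (dist u v) u.
Proof.
move=> lt_dist_N; have reachable : has (fun n => v \in reach n u) (iota 0 #|T|).
  by rewrite has_find size_iota.
by have := nth_find 0 reachable; rewrite nth_iota ?add0n.
Qed.

Lemma dist_triangle u v w : dist u w <= dist u v + dist v w.
Proof.
have [uv_N|] := ltnP (dist u v) #|T|; last first.
  by move=> /(leq_trans (dist_leqN u w))/leq_trans; apply; apply: leq_addr.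
have [vw_N|] := ltnP (dist v w) #|T|; last first.
  by move=> /(leq_trans (dist_leqN u w))/leq_trans; apply; apply: leq_addl.
exact: dist_leq (reach_trans (reach_dist uv_N) (reach_dist vw_N)).
Qed.

Lemma dist_sym u v : dist u v = dist v u.
Proof.
wlog suff: u v / dist u v <= dist v u by move=> le; apply/eqP; rewrite eqn_leq !le.
have [vu_N|] := ltnP (dist v u) #|T|; first exact: dist_leq (reach_sym (reach_dist vu_N)).
by apply: leq_trans (dist_leqN u v).
Qed.

Lemma dist0 u : dist u u = 0.
Proof. by apply/eqP; rewrite -leqn0; apply: dist_leq; rewrite reach0. Qed.

Lemma dist_leq_ecc u v : dist u v <= ecc u.
Proof. exact: (leq_bigmax v). Qed.

Lemma ecc_triangle u v : ecc u <= dist u v + ecc v.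
Proof.
apply/bigmax_leqP => w _; apply: leq_trans (dist_triangle u v w) _.
by rewrite leq_add2l dist_leq_ecc.
Qed.

Lemma ecc_leq_diam u : ecc u <= diam.
Proof. exact: (leq_bigmax u). Qed.

Lemma eU_geq_ecc (U : {set T}) v : oleq (Some (ecc v)) (eU U v).
Proof.
rewrite /eU; apply: (big_ind (oleq (Some (ecc v)))) => // [a b|x _].
  by rewrite oleq_omin => -> ->.
exact: ecc_triangle.
Qed.

Lemma eU_leqP (U : {set T}) v k :
  reflect (exists2 x, x \in U & dist v x + ecc x <= k) (oleq (eU U v) (Some k)).
Proof.
apply: (iffP idP) => [|[x xU le_k]]; last by rewrite /eU (bigD1 x) // omin_oleq /= le_k.
rewrite /eU; apply: (big_ind (fun a => oleq a (Some k) -> _)) => // [a b IHa IHb|x xU le_k].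
  by rewrite omin_oleq => /orP [/IHa | /IHb].
by exists x.
Qed.

Lemma diam_leq_of_eU (U : {set T}) k : (forall v, oleq (eU U v) (Some k)) -> diam <= k.
Proof.
by move=> le_k; apply/bigmax_leqP => v _; exact: oleq_trans (eU_geq_ecc U v) (le_k v).
Qed.

Lemma certificate_leq_packing (P U : {set T}) :
  packing (closed_ball1 e) P -> diam_certificate e U -> #|P| <= #|U|.
Proof.
move=> /forallP P_pack /forallP U_cert.
have /fin_all_exists2 [f fU f_near] :
    forall p, exists2 x, x \in U & dist p x + ecc x <= diam.
  by move=> p; apply/eU_leqP/U_cert.
have in_ball p : p \in closed_ball1 e (f p).
  by rewrite inE leq_subRL ?ecc_leq_diam // addnC dist_sym.
have f_inj : {in P &, injective f}.
  move=> p1 p2 p1P p2P f12; apply: (card_le1_eqP (P_pack (f p1))).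
    by rewrite in_setI p2P f12 in_ball.
  by rewrite in_setI p1P in_ball.
rewrite -(card_in_imset f_inj); apply/subset_leq_card/subsetP => _ /imsetP [p _ ->].
exact: fU.
Qed.

Lemma pi_closed1_leq_kappa : pi_closed1 e <= kappa e.
Proof.
apply/bigmax_leqP => P P_pack; rewrite /kappa.
apply: (big_ind (leq #|P|)) => [|a b le_a le_b|U U_cert].
- exact: max_card.
- by rewrite leq_min le_a le_b.
- exact: certificate_leq_packing.
Qed.

Definition far (a b : T) : bool := (0 < dist a b) && (diam <= dist a b + ecc a).

Lemma far_irrefl : irreflexive far.
Proof. by move=> a; rewrite /far dist0. Qed.

Lemma far_open_ball3 a b v :
  far a b -> a \in open_ball3 e v -> b \in open_ball3 e v -> False.
Proof.
rewrite /far !inE => /andP [_ far_ab] av bv.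
have := ecc_triangle a v; have := dist_triangle a v b; have := dist_sym a v.
have := ecc_leq_diam v; lia.
Qed.

Lemma valid_run_rcons r p :
  valid_run e (rcons r p) <-> [/\ valid_run e r, ~~ stopped e r & legal_step e r p].
Proof.
split=> [run_rp | [run_r r_go rp_legal] pre q post].
  have [r_go rp_legal] := run_rp r p [::] (esym (cats1 r p)).
  by split=> // pre q post r_eq; apply: (run_rp pre q (rcons post p)); rewrite r_eq rcons_cat.
case/lastP: post => [|post z]; first by rewrite cats1 => /rcons_inj [<- <-].
by rewrite -[q :: _]/(rcons (q :: post) z) -rcons_cat => /rcons_inj [/run_r].
Qed.

Lemma valid_run_legal r q : valid_run e r -> q \in r -> dist q.1 q.2 + ecc q.2 = ecc q.1.
Proof.
move=> run_r q_r; case/splitPr: q_r run_r => pre post run_r.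
by case: (run_r pre q post erefl) => _ [].
Qed.

Lemma valid_run_far pre p q : valid_run e (rcons pre p) -> q \in pre -> far q.1 p.1.
Proof.
case/valid_run_rcons => run_pre pre_go [p_max _] q_pre.
have near_q : oleq (eU (Uof pre) p.1) (Some (dist q.1 p.1 + ecc q.1)).
  apply/eU_leqP; exists q.2; first by rewrite inE map_f.
  by rewrite -(valid_run_legal run_pre q_pre) addnA leq_add2r (dist_sym q.1) dist_triangle.
case E: (eU (Uof pre) p.1) near_q => [M|] //= le_M; rewrite /far.
have le_diam_M : diam <= M by apply: diam_leq_of_eU => v; rewrite -E.
have lt_ecc_M : ecc q.1 < M.
  have [v] := forallPn pre_go; rewrite oleqNgt => /oleq_trans/(_ (p_max v)); rewrite E.
  by apply: leq_trans; rewrite ltnS (leq_bigmax_seq q.1) // map_f.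
by rewrite (leq_trans le_diam_M) // -(ltn_add2r (ecc q.1)) (leq_trans lt_ecc_M).
Qed.

Lemma valid_run_pairwise_far r : valid_run e r -> pairwise far (Kof r).
Proof.
elim/last_ind: r => [//|r p IHr] run_rp.
have [run_r _ _] := (valid_run_rcons r p).1 run_rp.
rewrite /Kof map_rcons pairwise_rcons IHr // andbT.
by apply/allP => _ /mapP [q q_r ->]; apply: valid_run_far run_rp q_r.
Qed.

Lemma size_run_leq_pi_third r : valid_run e r -> size r <= pi_third e.
Proof.
move=> /valid_run_pairwise_far K_far.
rewrite -(size_map fst) -(card_uniqP (pairwise_uniq far_irrefl K_far)) -cardsE.
by apply: leq_bigmax_cond; apply: pairwise_packing far_open_ball3 K_far.
Qed.

Lemma valid_run_extend r :
  0 < #|T| -> valid_run e r -> ~~ stopped e r -> exists p, valid_run e (rcons r p).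
Proof.
move=> T_gt0 run_r r_go; have [u u_max] := exists_oleq_max (eU (Uof r)) T_gt0.
by exists (u, u); apply/valid_run_rcons; split=> //; split=> //=; rewrite dist0.
Qed.

End Graph.

Lemma card_Uof (T : finType) (r : seq (T * T)) : #|Uof r| <= size r.
Proof. by rewrite cardsE (leq_trans (card_size _)) ?size_map. Qed.

Theorem theorem4 :
  exists c : nat,
  forall (T : finType) (e : rel T),
    0 < #|T| -> symmetric e -> irreflexive e -> (forall u v, connect e u v) ->
    (* termination: every unfinished run can be continued, and every run
       uses O(pi_{1/3}) queries *)
    (forall r : seq (T * T), valid_run e r -> ~~ stopped e r ->
       exists p, valid_run e (rcons r p)) /\
    (forall r : seq (T * T), valid_run e r -> 2 * size r <= c * pi_third e) /\
    (* correctness of the output of a finished run *)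
    (forall r : seq (T * T), valid_run e r -> stopped e r ->
       forall b, b \in Kof r -> ecc e b = \max_(w <- Kof r) ecc e w ->
         [/\ ecc e b = diam e,
             diam_certificate e (Uof r),
             #|Uof r| <= pi_third e
           & #|Uof r| * pi_closed1 e <= pi_third e * kappa e]).
Proof.
(* Distances of unreachable pairs are the junk value #|T|, which still satisfies the
   triangle inequality, so connectivity and irreflexivity are not needed. *)
exists 2 => T e T_gt0 e_sym _ _; split; [|split].
- by move=> r; apply: valid_run_extend.
- by move=> r run_r; rewrite leq_pmul2l // size_run_leq_pi_third.
move=> r run_r /forallP r_stop b _ b_max.
have b_diam : ecc e b = diam e.
  by apply/eqP; rewrite eqn_leq ecc_leq_diam b_max (diam_leq_of_eU r_stop).
have U_pi : #|Uof r| <= pi_third e.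
  exact: leq_trans (card_Uof r) (size_run_leq_pi_third e_sym run_r).
split=> //; last exact: leq_mul U_pi (pi_closed1_leq_kappa e_sym).
by apply/forallP => v; rewrite -b_diam b_max.
Qed.
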